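(* For every integer $n\ge 1$, $$m^*(n,4)\le m^*\big(n,4,2\lceil\log_2(n+1)\rceil\big)\le 4\lceil\log_2(n+1)\rceil.$$
   Context: For a binary matrix $M$ and a nonempty set $S$ of its columns, $S$ is a stopping set if the submatrix formed by $S$ has no row with exactly one $1$; $s(M)$ is the minimum size of a stopping set ($+\infty$ if none). $M$ is $d$-decodable if $s(M)\ge d+1$, and $(d,k)$-decodable if moreover every column has exactly $k$ ones. $m^*(n,d)$ (resp. $m^*(n,d,k)$) is the minimum $m$ such that an $m\times n$ $d$-decodable (resp. $(d,k)$-decodable) matrix exists. *)

From Stdlib Require Import ClassicalEpsilon.
From mathcomp Require Import all_boot all_order all_algebra.
Set Implicit Arguments. Unset Strict Implicit. Unset Printing Implicit Defensive.

(* Extended naturals: [None] stands for +infinity. *)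
Definition le_inf (a b : option nat) : bool :=
  match b with
  | None => true
  | Some b' => match a with None => false | Some a' => (a' <= b')%N end
  end.

Definition natmin (P : pred nat) : option nat :=
  match excluded_middle_informative (exists k, P k) with
  | left h => Some (ex_minn h)
  | right _ => None
  end.

Definition stopping_set (m n : nat) (M : 'M[bool]_(m, n)) (S : {set 'I_n}) : bool :=
  (S != set0) && [forall i : 'I_m, #|[set j in S | M i j]| != 1%N].

Definition stop_dist (m n : nat) (M : 'M[bool]_(m, n)) : option nat :=
  natmin (fun s => [exists S : {set 'I_n}, stopping_set M S && (#|S| == s)]).

Definition decodable (m n : nat) (M : 'M[bool]_(m, n)) (d : nat) : bool :=
  le_inf (Some d.+1) (stop_dist M).

Definition decodable_k (m n : nat) (M : 'M[bool]_(m, n)) (d k : nat) : bool :=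
  decodable M d && [forall j : 'I_n, #|[set i : 'I_m | M i j]| == k].

Definition mstar (n d : nat) : option nat :=
  natmin (fun m => [exists M : 'M[bool]_(m, n), decodable M d]).

Definition mstar_k (n d k : nat) : option nat :=
  natmin (fun m => [exists M : 'M[bool]_(m, n), decodable_k M d k]).

From mathcomp Require Import all_boot all_order all_algebra.
From Stdlib Require Import ClassicalEpsilon.
From mathcomp Require Import finfield ring zify.
Import GRing.Theory.

Set Implicit Arguments.
Unset Strict Implicit.
Unset Printing Implicit Defensive.

(* Let L = ceil(log_2 (n+1)), so that n <= 2^L, and label the columns by
   distinct elements x_j of GF(2^L), viewed as an L-dimensional space over
   GF(2). Take one row for each triple (t, b, v): column j has a 1 in it iff
   the b-th coordinate of x_j (t = false) or of x_j^3 (t = true) equals v.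
   This gives 4L rows and exactly 2L ones per column. On a stopping set S each
   coordinate takes each value 0 or at least 2 times, so two distinct columns,
   which differ in some coordinate of x, force |S| >= 4. If |S| = 4, every
   coordinate of x and of x^3 is even on S, i.e. the x_j (j in S) and their
   cubes both sum to 0; but in characteristic 2,
   a^3 + b^3 + c^3 + (a+b+c)^3 = (a+b)(b+c)(c+a), which rules out four
   distinct such elements. *)

Lemma le_natmin (P : pred nat) m : P m -> le_inf (natmin P) (Some m).
Proof.
rewrite /natmin => Pm; case: excluded_middle_informative => [h|[]]; last by exists m.
by case: ex_minnP => k _ /(_ m Pm).
Qed.

Lemma mstar_le_mstar_k n d k : le_inf (mstar n d) (mstar_k n d k).
Proof.
rewrite /mstar_k /natmin; case: excluded_middle_informative => // h.
case: ex_minnP => m /existsP[M /andP[decM _]] _.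
by apply: le_natmin; apply/existsP; exists M.
Qed.

Lemma decodable_of_stopping_gt m n (M : 'M[bool]_(m, n)) d :
  (forall S, stopping_set M S -> (d < #|S|)%N) -> decodable M d.
Proof.
move=> gtS; rewrite /decodable /stop_dist /natmin.
case: excluded_middle_informative => // h.
by case: ex_minnP => s /existsP[S /andP[/gtS ltdS /eqP <-]].
Qed.

Section IncidenceMatrix.
Variables (T : finType) (n : nat) (P : T -> 'I_n -> bool).

Definition incidence_mx : 'M[bool]_(#|T|, n) := \matrix_(i, j) P (enum_val i) j.

Lemma stopping_set_incidence_mx S : stopping_set incidence_mx S ->
  S != set0 /\ forall u, #|[set j in S | P u j]| != 1%N.
Proof.
case/andP=> S0 /forallP rows; split=> // u.
have -> : [set j in S | P u j] = [set j in S | incidence_mx (enum_rank u) j].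
  by apply/setP => j; rewrite !inE mxE enum_rankK.
exact: rows.
Qed.

Lemma card_col_incidence_mx j : #|[set i | incidence_mx i j]| = #|[set u | P u j]|.
Proof.
rewrite -(card_imset _ enum_val_inj); apply: eq_card => u; rewrite [RHS]inE.
apply/imsetP/idP => [[i]|Puj]; first by rewrite inE mxE => ? ->.
by exists (enum_rank u); rewrite ?inE ?mxE enum_rankK.
Qed.

End IncidenceMatrix.

Section BalancedTests.
Variables (I : finType) (S : {set I}) (f : I -> bool).

(* The stopping-set condition on the pair of rows "f j = true", "f j = false". *)
Definition balanced := forall v, #|[set j in S | f j == v]| != 1%N.

Lemma card_test_split :
  (#|[set j in S | f j == true]| + #|[set j in S | f j == false]|)%N = #|S|.
Proof.
rewrite -(cardsID [set j | f j] S); congr (_ + _)%N; apply: eq_card => j;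
  by rewrite !inE ?eqb_id ?eqbF_neg // andbC.
Qed.

Hypothesis f_bal : balanced.

Lemma balanced_card_gt1 : S != set0 -> (1 < #|S|)%N.
Proof.
rewrite -card_gt0 => S0; have := card_test_split.
by have := f_bal true; have := f_bal false; lia.
Qed.

Lemma balanced_separating_card j1 j2 :
  j1 \in S -> j2 \in S -> f j1 != f j2 -> (4 <= #|S|)%N.
Proof.
move=> Sj1 Sj2 f12.
have hit v : (0 < #|[set j in S | f j == v]|)%N.
  apply/card_gt0P; have [f1v|f1v] := eqVneq (f j1) v.
    by exists j1; rewrite !inE Sj1 f1v eqxx.
  by exists j2; rewrite !inE Sj2; move: f12 f1v; case: (f j1); case: (f j2); case: v.
have := card_test_split; have := hit true; have := hit false.
by have := f_bal true; have := f_bal false; lia.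
Qed.

Lemma balanced_card4_even : #|S| = 4%N -> ~~ odd #|[set j in S | f j]|.
Proof.
move=> S4; have := card_test_split; rewrite S4.
have -> : [set j in S | f j] = [set j in S | f j == true].
  by apply/setP => j; rewrite !inE eqb_id.
move: (f_bal true) (f_bal false).
move: #|[set j in S | f j == true]| #|[set j in S | f j == false]| => c c' c1 c'1 split4.
have : c \in [:: 0; 2; 4]%N by rewrite !inE; lia.
by rewrite !inE => /or3P[] /eqP ->.
Qed.

End BalancedTests.

Local Open Scope ring_scope.

Section CharTwo.
Variables (R : fieldType) (charR2 : (2 \in [pchar R])%N).

Lemma cubes_char2 (a b c : R) :
  a ^+ 3 + b ^+ 3 + c ^+ 3 + (a + b + c) ^+ 3 = (a + b) * (b + c) * (c + a).
Proof.
have -> : a ^+ 3 + b ^+ 3 + c ^+ 3 + (a + b + c) ^+ 3 = (a + b) * (b + c) * (c + a)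
  + 2%:R * (a ^+ 3 + b ^+ 3 + c ^+ 3 + (a + b) * (b + c) * (c + a)) by ring.
by rewrite (pcharf0 charR2) mul0r addr0.
Qed.

Lemma uniq4_sum_cubes_neq0 (a b c d : R) :
  uniq [:: a; b; c; d] -> a + b + c + d = 0 -> a ^+ 3 + b ^+ 3 + c ^+ 3 + d ^+ 3 != 0.
Proof.
move=> uniq_abcd sum0; have eq_of_add0 (x y : R) : x + y = 0 -> x = y.
  by move/eqP; rewrite addr_eq0 oppr_pchar2 // => /eqP.
have -> : d = a + b + c.
  by rewrite -(oppr_pchar2 charR2 d); apply/eqP; rewrite eq_sym -addr_eq0 sum0.
rewrite cubes_char2 !mulf_neq0 //; apply: contraTneq uniq_abcd => /eq_of_add0 ->;
  by rewrite /= !inE !eqxx /= ?orbT ?andbF.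
Qed.

End CharTwo.

Section BinaryCoordinates.
Variable V : vectType 'F_2.
Let B := vbasis {:V}.

Definition bit (b : 'I_(\dim {:V})) (x : V) : bool := coord B b x != 0.

Lemma F2_eq_nat (y : 'F_2) : y = (y != 0)%:R.
Proof. by case: y => [[|[|k]]] //= lt_k2; apply: val_inj. Qed.

Lemma coord_bit b x : coord B b x = (bit b x)%:R.
Proof. exact: F2_eq_nat. Qed.

Lemma exists_bit_neq x y : x != y -> exists b, bit b x != bit b y.
Proof.
move=> xy; apply/existsP; apply: contraR xy => /existsPn eq_bits; apply/eqP.
rewrite (coord_vbasis (memvf x)) (coord_vbasis (memvf y)).
by apply: eq_bigr => b _; rewrite !coord_bit; move/negPn: (eq_bits b) => /eqP ->.
Qed.

Lemma sum_eq0_even_bits (I : finType) (S : {set I}) (x : I -> V) :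
  (forall b, ~~ odd #|[set j in S | bit b (x j)]|) -> \sum_(j in S) x j = 0.
Proof.
move=> even_bits; rewrite (coord_vbasis (memvf (\sum_(j in S) x j))).
apply: big1 => b _; rewrite linear_sum /=.
have -> : \sum_(j in S) coord B b (x j) = (#|[set j in S | bit b (x j)]|)%:R.
  rewrite -sum1_card natr_sum big_mkcond [RHS]big_mkcond /=.
  by apply: eq_bigr => j _; rewrite coord_bit !inE; case: (j \in S); case: bit.
by rewrite -(Fp_nat_mod (isT : prime 2)) modn2 (negbTE (even_bits b)) scale0r.
Qed.

End BinaryCoordinates.

Section CubeCode.
Variables (F : finFieldType) (charF2 : (2 \in [pchar F])%N).
Let V := pPrimeCharType charF2.
Variables (n : nat) (X : 'I_n -> V).
Hypothesis X_inj : injective X.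

Definition cube_test (tb : bool * 'I_(\dim {:V})) (j : 'I_n) : bool :=
  bit tb.2 (if tb.1 then X j ^+ 3 else X j).

Definition cube_code (u : bool * 'I_(\dim {:V}) * bool) (j : 'I_n) : bool :=
  cube_test u.1 j == u.2.

Lemma card_col_cube_code j : #|[set u | cube_code u j]| = (2 * \dim {:V})%N.
Proof.
have -> : [set u | cube_code u j] = [set (tb, cube_test tb j) | tb in setT].
  apply/setP => [[tb v]]; rewrite inE /cube_code /=.
  by apply/eqP/imsetP => [<-|[tb' _ [-> ->]]]; first by exists tb.
rewrite card_imset ?cardsT ?card_prod ?card_bool ?card_ord //.
by move=> tb tb' [].
Qed.

Lemma cube_code_stopping_gt4 S : S != set0 ->
  (forall u, #|[set j in S | cube_code u j]| != 1%N) -> (4 < #|S|)%N.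
Proof.
move=> S0 rows; have bal tb : balanced S (cube_test tb) := fun v => rows (tb, v).
have [b0 _] := exists_bit_neq (oner_neq0 V).
have [j1 [j2 [Sj1 Sj2 j12]]] := card_gt1P (balanced_card_gt1 (bal (false, b0)) S0).
have [b sep] : exists b, bit b (X j1) != bit b (X j2).
  by apply: exists_bit_neq; rewrite (inj_eq X_inj).
rewrite ltn_neqAle (balanced_separating_card (bal (false, b)) Sj1 Sj2 sep) andbT.
apply/eqP => /esym S4.
have sum0 t : \sum_(j in S) (if t then X j ^+ 3 else X j) = 0.
  exact/sum_eq0_even_bits/(fun b => balanced_card4_even (bal (t, b)) S4).
move: (enum_uniq S) (cardE S) (sum0 false) (sum0 true); rewrite S4 -!big_enum /=.
case: (enum S) => [|k1 [|k2 [|k3 [|k4 [|]]]]] //= uniq_k _.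
rewrite !big_cons !big_nil !addr0 !addrA => sumX sumX3.
have uniqX : uniq [:: X k1; X k2; X k3; X k4].
  by rewrite (map_inj_uniq X_inj [:: _; _; _; _]).
by move: (uniq4_sum_cubes_neq0 charF2 uniqX sumX); rewrite sumX3 eqxx.
Qed.

End CubeCode.

Theorem corollary4p4 (n : nat) (hn : (1 <= n)%N) :
  le_inf (mstar n 4) (mstar_k n 4 (2 * up_log 2 n.+1)) /\
  le_inf (mstar_k n 4 (2 * up_log 2 n.+1)) (Some (4 * up_log 2 n.+1)%N).
Proof.
split; first exact: mstar_le_mstar_k.
set L := up_log 2 n.+1.
have L_gt0 : (0 < L)%N by rewrite up_log_gt0 ltnS.
have [F charF2 cardF] := pPrimePowerField (isT : prime 2) L_gt0.
pose V := pPrimeCharType charF2.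
have dimV : \dim {:V} = L by rewrite pprimeChar_dimf [#|V|]cardF pfactorK.
have le_nV : (n <= #|V|)%N.
  by rewrite [#|V|]cardF; have := @up_logP 2 n.+1 isT; rewrite -/L; lia.
pose X (j : 'I_n) : V := enum_val (widen_ord le_nV j).
have X_inj : injective X by move=> i j /enum_val_inj [] /val_inj.
have rowsP : #|{: bool * 'I_(\dim {:V}) * bool}| = (4 * L)%N.
  by rewrite !card_prod card_bool card_ord dimV; lia.
apply: le_natmin; apply/existsP; rewrite -rowsP.
exists (incidence_mx (@cube_code F charF2 n X)); apply/andP; split.
  apply: decodable_of_stopping_gt => S /stopping_set_incidence_mx [S0 rows].
  exact: cube_code_stopping_gt4 X_inj S S0 rows.
by apply/forallP => j; rewrite card_col_incidence_mx card_col_cube_code dimV.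
Qed.
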